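(* Let $d\ge1$, let $\Lambda\subset\mathbb{R}^{2d}$ be a lattice, let $r>0$ and let $\phi\in\ell^1(\Lambda)$ be non-negative with $$1-\delta\le\sum_{\lambda\in\Lambda}\phi(\lambda)\le1,\qquad\sum_{\lambda\in\Lambda}|\lambda|\,|\phi(\lambda)|<\infty$$ for some $0\le\delta\le1$. Then there exists a constant $C$ depending on $r$ such that $$\Vert\chi_\Omega-\chi_\Omega*_\Lambda\phi\Vert_{\ell^1(\Lambda)}\le C\Big(\sum_{\lambda\in\Lambda}|\lambda|\,|\phi(\lambda)|+1\Big)\#\partial^{r_\Lambda}_\Lambda\Omega+\delta\,\#(\Omega\cap\Lambda)$$ for every compact set $\Omega\subset\mathbb{R}^{2d}$, where $r_\Lambda=r+l_M$ and $l_M$ is the diameter of the fundamental domain of $\Lambda$.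
   Context: A lattice is $\Lambda=M\mathbb{Z}^{2d}$ with $M$ an invertible real $2d\times2d$ matrix; $l_M$ denotes the diameter of the (fixed) fundamental domain of $\Lambda$. The discrete convolution is $(a*_\Lambda b)(\lambda)=\sum_{\lambda'\in\Lambda}a(\lambda')b(\lambda-\lambda')$, and $\Vert c\Vert_{\ell^1(\Lambda)}=\sum_{\lambda\in\Lambda}|c(\lambda)|$; $\chi_\Omega$ is regarded as a function on $\Lambda$. $B(z,r)$ is the open ball; for $r>0$, $\partial^r_\Lambda\Omega=\Lambda\cap(\partial\Omega+B(0,r))$, and $\#$ denotes cardinality. *)

From HB Require Import structures.
From mathcomp Require Import all_boot all_order all_algebra.
From mathcomp Require Import all_classical all_reals all_analysis.
Set Implicit Arguments. Unset Strict Implicit. Unset Printing Implicit Defensive.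
Import Order.TTheory GRing.Theory Num.Theory.
Import numFieldNormedType.Exports.
Local Open Scope classical_set_scope.
Local Open Scope ring_scope.

Definition enorm (R : realType) (n : nat) (x : 'cV[R]_n) : R :=
  Num.sqrt (\sum_(i < n) x i 0 ^+ 2).

Definition lattice (R : realType) (n : nat) (M : 'M[R]_n) : set 'cV[R]_n :=
  [set M *m map_mx (fun z : int => z%:~R) k | k in [set: 'cV[int]_n]].

Definition fund_domain (R : realType) (n : nat) (M : 'M[R]_n) : set 'cV[R]_n :=
  [set M *m t | t in [set t : 'cV[R]_n | forall i, 0 <= t i 0 < 1]].

Definition diam_fund (R : realType) (n : nat) (M : 'M[R]_n) : R :=
  sup [set enorm (x - y) | x in fund_domain M & y in fund_domain M].

Definition bdry (R : realType) (n : nat) (O : set 'cV[R]_n) : set 'cV[R]_n :=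
  closure O `\` O^°.

Definition lat_bdry (R : realType) (n : nat) (M : 'M[R]_n) (O : set 'cV[R]_n) (r : R)
  : set 'cV[R]_n :=
  lattice M `&` [set x | exists2 y, bdry O y & enorm (x - y) < r].

Definition card_e (R : realType) (n : nat) (A : set 'cV[R]_n) : \bar R :=
  (\esum_(x in A) 1%E)%E.

Definition l1norm (R : realType) (n : nat) (M : 'M[R]_n) (c : 'cV[R]_n -> R) : \bar R :=
  (\esum_(x in lattice M) (`|c x|)%:E)%E.

(* discrete convolution over Lambda: sum of the (absolutely summable) family
   lambda' |-> a(lambda') b(lambda - lambda'), computed as the difference of the
   sums of positive and negative parts. *)
Definition lconv (R : realType) (n : nat) (M : 'M[R]_n) (a b : 'cV[R]_n -> R)
  (x : 'cV[R]_n) : R :=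
  fine (\esum_(y in lattice M) ((Num.max (a y * b (x - y)) 0)%:E))%E -
  fine (\esum_(y in lattice M) ((Num.max (- (a y * b (x - y))) 0)%:E))%E.

From HB Require Import structures.
From mathcomp Require Import all_boot all_order all_algebra.
From mathcomp Require Import all_classical all_reals all_analysis.
From mathcomp Require Import ring lra zify.
Import Order.TTheory GRing.Theory Num.Theory.
Import numFieldNormedType.Exports.
Set Implicit Arguments. Unset Strict Implicit. Unset Printing Implicit Defensive.
Local Open Scope classical_set_scope.
Local Open Scope ring_scope.

(* Since the mass of phi lies in [1 - delta, 1], at a lattice point l the error
   |chi(l) - (chi * phi)(l)| is at most delta chi(l) + sum_mu phi(mu) |chi(l) - chi(l - mu)|.
   For fixed mu, if chi(l) <> chi(l - mu) the segment from l to l - mu meets the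
   boundary of Omega at l - s mu; that point is within l_M of a lattice point k of
   the r_Lambda-boundary, and rounding s to a multiple j/N with N > |mu| puts l in
   the cube of half-side 1 + l_M around k + (j/N) mu.  A cube of fixed size holds at
   most K lattice points, so at most K (|mu| + 2) #boundary values of l contribute,
   and summing against phi gives the bound with C = 2K + 1. *)

Section esum_facts.
Variables (R : realType) (T : choiceType).
Local Open Scope ereal_scope.

Lemma ge0_esumZl (S : set T) (c : R) (a : T -> \bar R) : (0 <= c)%R ->
  (forall i, S i -> 0 <= a i) ->
  \esum_(i in S) (c%:E * a i) = c%:E * \esum_(i in S) a i.
Proof.
move=> c0 a0.
have sumZ A : fsets S A -> \sum_(i \in A) c%:E * a i = c%:E * \sum_(i \in A) a i.
  move=> [fA AS]; rewrite !fsbig_finite //= big_seq [in RHS]big_seq.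
  by rewrite ge0_sume_distrr // => i; rewrite in_fset_set // inE => /AS /a0.
rewrite /esum -ereal_supZl //; last first.
  by apply/set0P; exists 0; exists set0; rewrite ?fsbig_set0 //; exact: fsets_set0.
congr ereal_sup; apply/seteqP; split => x.
  by move=> [A SA <-{x}]; exists (\sum_(i \in A) a i); [exists A | rewrite sumZ].
by move=> [_ [A SA <-] <-{x}]; exists A; rewrite ?sumZ.
Qed.

Lemma le_esum_subset (A B : set T) (a : T -> \bar R) : A `<=` B ->
  (forall i, B i -> 0 <= a i) -> \esum_(i in A) a i <= \esum_(i in B) a i.
Proof.
move=> AB a0; rewrite esum_mkcond [leRHS]esum_mkcond; apply: le_esum => i _.
case: ifPn => iA; first by rewrite ifT // inE; apply: AB; exact: set_mem.
by case: ifPn => // /[!inE] /a0.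
Qed.

Lemma exchange_esum (T' : choiceType) (A : set T) (B : set T')
    (a : T -> T' -> \bar R) : (forall i j, A i -> B j -> 0 <= a i j) ->
  \esum_(i in A) \esum_(j in B) a i j = \esum_(j in B) \esum_(i in A) a i j.
Proof.
move=> a0; rewrite (esum_esum (J := fun=> B)) //.
rewrite (esum_esum (J := fun=> A)); last by move=> j i Bj Ai; exact: a0.
rewrite (reindex_esum (A `*` B) _ (fun x => (x.2, x.1))) //; split => /=.
- by move=> [i j] [/= ? ?]; split.
- by move=> [i1 i2] [j1 j2] /= _ _ [] -> ->.
- by move=> [j i] [/= ? ?]; exists (i, j).
Qed.

End esum_facts.

Section segment.
Variables (R : realType) (n : nat).

Lemma segment_meets_bdry (Omega : set 'cV[R]_n) (a b : 'cV[R]_n) :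
  closed Omega -> Omega a -> ~ Omega b ->
  exists2 s : R, 0 <= s <= 1 & bdry Omega (a + s *: (b - a)).
Proof.
move=> clOmega Oa Ob.
pose f t := a + t *: (b - a).
have fc : continuous f.
  by move=> t; apply: cvgD; [exact: cvg_cst | apply: cvgZr_tmp; exact: cvg_id].
pose T := `[(0:R), 1]%classic `&` f @^-1` Omega.
have T0 : T 0 by split; rewrite /= ?in_itv /= ?lexx ?ler01 // /f scale0r addr0.
have Tub : has_ubound T by exists 1 => t [] /=; rewrite in_itv /= => /andP[].
have Tcl : closed T.
  by apply: closedI; [exact: itv_closed | apply: preimage_closed => // t _; exact: fc].
have [+ Os] : T (sup T) by apply: Tcl; apply: closure_sup => //; exists 0.
rewrite /= in_itv /= => /andP[s0 s1].
exists (sup T); first by rewrite s0.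
split; first exact: subset_closure.
move=> /= /(fc (sup T)) /nbhs_ballP[e e0 be].
have s1' : sup T < 1.
  rewrite lt_neqAle s1 andbT; apply/eqP => e1; apply: Ob.
  by move: Os; rewrite /preimage /= /f e1 scale1r addrC subrK.
pose t := Num.min (sup T + e / 2) 1.
have t_le : t <= sup T + e / 2 by rewrite /t ge_min lexx.
have t_gt : sup T < t by rewrite /t lt_min s1' andbT ltrDl divr_gt0.
have Tt : T t.
  split; first by rewrite /= in_itv /= ge_min lexx orbT andbT (le_trans s0 (ltW t_gt)).
  by apply: be; rewrite /ball /= ltr_distl; apply/andP; split; lra.
have := sup_upper_bound (conj (ex_intro _ 0 T0) Tub) Tt.
by rewrite leNgt t_gt.
Qed.

Lemma segment_crosses_bdry (Omega : set 'cV[R]_n) (a b : 'cV[R]_n) : closed Omega ->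
  (a \in Omega) != (b \in Omega) ->
  exists2 s : R, 0 <= s <= 1 & bdry Omega (a + s *: (b - a)).
Proof.
move=> clOmega; case: (boolP (a \in Omega)) => aO; case: (boolP (b \in Omega)) => bO //= _.
  by apply: segment_meets_bdry => //; [exact: set_mem | move/mem_set; exact/negP].
have [s /andP[s0 s1] Bs] :=
  segment_meets_bdry clOmega (set_mem bO) (fun Oa => negP aO (mem_set Oa)).
exists (1 - s); first by apply/andP; split; lra.
suff -> : a + (1 - s) *: (b - a) = b + s *: (a - b) by [].
by apply/matrixP => i j; rewrite !mxE; ring.
Qed.

End segment.

Lemma sum_sqr_le_sqr_sum (R : realFieldType) (I : finType) (F : I -> R) :
  (forall i, 0 <= F i) -> \sum_i F i ^+ 2 <= (\sum_i F i) ^+ 2.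
Proof.
move=> F0.
suff [] : \sum_i F i ^+ 2 <= (\sum_i F i) ^+ 2 /\ 0 <= \sum_i F i by [].
elim/big_rec2: _ => [|i a b _ [ab b0]]; first by rewrite expr0n /= lexx.
by have := F0 i; split; [nra | rewrite addr_ge0].
Qed.

Section euclidean_norm.
Variables (R : realType) (n : nat).
Implicit Types x y : 'cV[R]_n.

Lemma enorm_ge0 x : 0 <= enorm x.
Proof. exact: sqrtr_ge0. Qed.

Lemma enorm_distC x y : enorm (x - y) = enorm (y - x).
Proof. by rewrite /enorm; congr Num.sqrt; apply: eq_bigr => i _; rewrite !mxE -sqrrN opprB. Qed.

Lemma normr_coord_le_enorm x i : `|x i 0| <= enorm x.
Proof.
rewrite -sqrtr_sqr /enorm; apply: ler_wsqrtr.
by rewrite (bigD1 i) //= lerDl; apply: sumr_ge0 => j _; exact: sqr_ge0.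
Qed.

Lemma enorm_le_sum_norm x : enorm x <= \sum_i `|x i 0|.
Proof.
have s0 : 0 <= \sum_i `|x i 0| by apply: sumr_ge0.
rewrite -(ger0_norm s0) -sqrtr_sqr /enorm; apply: ler_wsqrtr.
rewrite (eq_bigr (fun i => `|x i 0| ^+ 2)) => [|i _]; last by rewrite real_normK ?num_real.
exact: sum_sqr_le_sqr_sum.
Qed.

Lemma normr_mulmx_coord_le m (A : 'M[R]_(m, n)) x (b : R) i :
  (forall j, `|x j 0| <= b) -> `|(A *m x) i 0| <= (\sum_j `|A i j|) * b.
Proof.
move=> xb; rewrite !mxE mulr_suml.
apply: le_trans (ler_norm_sum _ _ _) _; apply: ler_sum => j _.
by rewrite normrM ler_wpM2l.
Qed.

End euclidean_norm.

Section lattice.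
Variables (R : realType) (n : nat) (M : 'M[R]_n).
Local Notation L := (lattice M).
Let intmx (k : 'cV[int]_n) : 'cV[R]_n := map_mx (fun z : int => z%:~R) k.

Lemma latticeB x y : L x -> L y -> L (x - y).
Proof.
move=> [k1 _ <-] [k2 _ <-]; exists (k1 - k2) => //.
suff e : intmx (k1 - k2) = intmx k1 - intmx k2 by rewrite -/(intmx _) e mulmxBr.
by apply/matrixP => i j; rewrite !mxE intrB.
Qed.

Lemma fund_domain0 : fund_domain M 0.
Proof. by exists 0; [move=> i; rewrite mxE lexx ltr01 | rewrite mulmx0]. Qed.

Lemma diam_fund_ubound :
  has_ubound [set enorm (x - y) | x in fund_domain M & y in fund_domain M].
Proof.
exists (\sum_(i < n) \sum_j `|M i j|) => _ [_ [t1 t1_01 <-] [_ [t2 t2_01 <-] <-]].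
apply: le_trans (enorm_le_sum_norm _) _; apply: ler_sum => i _.
rewrite -mulmxBr -[leRHS]mulr1; apply: normr_mulmx_coord_le => j.
move: (t1_01 j) (t2_01 j); rewrite !mxE => /andP[? ?] /andP[? ?].
by rewrite ler_norml; apply/andP; split; lra.
Qed.

Lemma le_diam_fund x y : fund_domain M x -> fund_domain M y ->
  enorm (x - y) <= diam_fund M.
Proof.
move=> Fx Fy; apply: sup_upper_bound; last by exists x => //; exists y.
by split; [exists (enorm (x - y)); exists x => //; exists y | exact: diam_fund_ubound].
Qed.

Lemma diam_fund_ge0 : 0 <= diam_fund M.
Proof. exact: le_trans (enorm_ge0 _) (le_diam_fund fund_domain0 fund_domain0). Qed.

Lemma lattice_near : M \in unitmx ->
  forall x, exists2 k, L k & enorm (x - k) <= diam_fund M.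
Proof.
move=> hM x; pose t := invmx M *m x; pose k := map_mx (fun r : R => Num.floor r) t.
exists (M *m intmx k); first by exists k.
rewrite -(subr0 (x - _)); apply: le_diam_fund fund_domain0.
exists (t - intmx k); last by rewrite mulmxBr /t mulKVmx.
move=> i; rewrite !mxE subr_ge0 floor_le /=.
by have := floorD1_gt (t i 0); rewrite intrD /t mxE; lra.
Qed.

Definition cube (c : 'cV[R]_n) (rho : R) : set 'cV[R]_n :=
  [set x | forall i, `|x i 0 - c i 0| <= rho].

Lemma lattice_cube0_finite (rho : R) : M \in unitmx -> 0 <= rho ->
  finite_set (L `&` cube 0 rho).
Proof.
move=> hM rho0.
pose N := (Num.truncn ((\sum_i \sum_j `|invmx M i j|) * rho)).+1.
pose g (t : 'cV['I_(N + N).+1]_n) : 'cV[R]_n := M *m \col_i ((t i 0)%:R - N%:R).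
apply: (@sub_finite_set _ _ (g @` setT)); first last.
  by apply: finite_image; exact: finite_finset.
move=> _ [[k _ <-] k_cube].
have k_lt i : `|k i 0| < N%:Z.
  rewrite -(ltr_int R) intr_norm; apply: le_lt_trans (truncnS_gt _).
  have := @normr_mulmx_coord_le _ _ _ (invmx M) (M *m intmx k) rho i.
  rewrite mulKmx // mxE => /(_ _)/le_trans; apply.
    by move=> j; have := k_cube j; rewrite !mxE subr0.
  apply: ler_wpM2r => //.
  by rewrite [leRHS](bigD1 i) //= lerDl; apply: sumr_ge0 => j _; apply: sumr_ge0.
exists (\col_i (inord (absz (k i 0 + N%:Z)))) => //.
rewrite /g; congr (M *m _); apply/matrixP => i j; rewrite !mxE ord1.
have := k_lt i; rewrite ltr_norml => /andP[k_lo k_hi].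
rewrite inordK; last lia.
by rewrite natr_absz ger0_norm ?intrD ?addrK //; lia.
Qed.

Lemma lattice_cube_card_bounded (rho : R) : M \in unitmx -> 0 <= rho ->
  exists2 K : R, 0 <= K & forall c, (\esum_(x in L `&` cube c rho) 1 <= K%:E)%E.
Proof.
move=> hM rho0; pose F := L `&` cube 0 (rho + diam_fund M).
have fF : finite_set F by apply: lattice_cube0_finite; rewrite // addr_ge0 ?diam_fund_ge0.
exists (\sum_(x \in F) (1:R)); first exact: fsumr_ge0.
move=> c; have [k0 Lk0 c_k0] := lattice_near hM c.
rewrite -(esum_image _ (fun x => x - k0) (fun=> 1%E)); last first.
  by move=> x y _ _ /= /addIr.
have shift_sub : (fun x => x - k0) @` (L `&` cube c rho) `<=` F.
  move=> _ [x [Lx x_cube] <-]; split; first exact: latticeB.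
  move=> i; rewrite !mxE subr0.
  have := normr_coord_le_enorm (c - k0) i; rewrite !mxE => /le_trans/(_ c_k0) ck0.
  have := ler_normD (x i 0 - c i 0) (c i 0 - k0 i 0); rewrite addrA subrK.
  by move/le_trans; apply; apply: lerD.
apply: le_trans (le_esum_subset shift_sub _) _ => //.
by rewrite esum_fset // fsumEFin.
Qed.

End lattice.

Section boundary_crossings.
Variables (R : realType) (n : nat) (M : 'M[R]_n).
Hypothesis hM : M \in unitmx.
Local Notation L := (lattice M).
Variables (Omega : set 'cV[R]_n) (r : R).
Hypotheses (clOmega : closed Omega) (r_gt0 : 0 < r).
Local Notation B := (lat_bdry M Omega (r + diam_fund M)).

Lemma crossing_in_cube (l mu : 'cV[R]_n) (N : nat) : enorm mu < N%:R ->
  (l \in Omega) != (l - mu \in Omega) ->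
  exists (j : 'I_N.+1) (k : 'cV[R]_n),
    B k /\ cube (k + ((j : nat)%:R / N%:R) *: mu) (1 + diam_fund M) l.
Proof.
move=> muN cross.
have [s /andP[s0 s1]] := segment_crosses_bdry clOmega cross.
rewrite addrAC subrr add0r scalerN => By.
have N_gt0 : 0 < (N%:R : R) by apply: le_lt_trans (enorm_ge0 _) muN.
have /andP[j_le j_gt] := truncn_itv (mulr_ge0 s0 (ltW N_gt0)).
set j := Num.truncn (s * N%:R) in j_le j_gt.
have jN : (j < N.+1)%N.
  by rewrite ltnS -(ler_nat R); apply: le_trans j_le _; rewrite ler_piMl // ltW.
have [k Lk yk] := lattice_near hM (l - s *: mu).
exists (Ordinal jN), k; split.
  split => //; exists (l - s *: mu) => //.
  by rewrite enorm_distC; apply: le_lt_trans yk _; rewrite ltrDr.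
move=> i; rewrite !mxE /=.
have -> : l i 0 - (k i 0 + j%:R / N%:R * mu i 0) =
    (l i 0 - s * mu i 0 - k i 0) + (s - j%:R / N%:R) * mu i 0 by ring.
apply: le_trans (ler_normD _ _) _; rewrite [leRHS]addrC; apply: lerD.
  by have := normr_coord_le_enorm (l - s *: mu - k) i; rewrite !mxE => /le_trans; apply.
have sj : `|s - j%:R / N%:R| <= N%:R^-1.
  rewrite ger0_norm; last by rewrite subr_ge0 ler_pdivrMr.
  rewrite lerBlDr -[X in X + _]mul1r -mulrDl ler_pdivlMr // addrC natr1.
  exact: ltW.
rewrite normrM; apply: le_trans (ler_wpM2r (normr_ge0 _) sj) _.
rewrite mulrC ler_pdivrMr // mul1r; apply: ltW; apply: le_lt_trans muN.
exact: normr_coord_le_enorm.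
Qed.

Variable K : R.
Hypothesis K_ge0 : 0 <= K.
Hypothesis cube_card_le :
  forall c, (\esum_(x in L `&` cube c (1 + diam_fund M)) 1 <= K%:E)%E.

Lemma esum_indicator_shift_le (mu : 'cV[R]_n) :
  (\esum_(l in L) (`|(\1_Omega l : R) - \1_Omega (l - mu)|)%:E <=
     (K * (enorm mu + 2))%:E * card_e B)%E.
Proof.
set N := (Num.truncn (enorm mu)).+1.
pose hit (j : 'I_N.+1) k l : \bar R :=
  if l \in cube (k + ((j : nat)%:R / N%:R) *: mu) (1 + diam_fund M) then 1%E else 0%E.
have hit_ge0 j k l : (0 <= hit j k l)%E by rewrite /hit; case: ifP.
have covered l : L l -> ((`|(\1_Omega l : R) - \1_Omega (l - mu)|)%:E <=
    \sum_(j < N.+1) \esum_(k in B) hit j k l)%E.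
  move=> Ll; have [cross|] := boolP ((l \in Omega) != (l - mu \in Omega)); last first.
    rewrite negbK => /eqP eqO; rewrite !indicE eqO subrr normr0.
    by apply: sume_ge0 => j _; exact: esum_ge0.
  have [j [k [Bk l_cube]]] := crossing_in_cube (truncnS_gt _) cross.
  rewrite (bigD1 j) //=; apply: lee_paddr; first by apply: sume_ge0 => *; exact: esum_ge0.
  apply: le_trans (le_esum_subset (A := [set k]) _ _) => //; last by move=> ? ->.
  rewrite esum_set1 // /hit mem_set // lee_fin.
  by move: cross; rewrite !indicE; case: (l \in Omega); case: (l - mu \in Omega) => //= _;
    rewrite ?subr0 ?sub0r ?normrN normr1.
apply: le_trans (le_esum covered) _.
rewrite esum_sum; last by move=> l j _ _; exact: esum_ge0.
under eq_bigr do rewrite exchange_esum //.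
apply: (@le_trans _ _ (\sum_(j < N.+1) (K%:E * card_e B))%E).
  apply: lee_sum => j _; rewrite /card_e -ge0_esumZl //; apply: le_esum => k _.
  rewrite mule1 /hit -esum_mkcondr; exact: cube_card_le.
rewrite -ge0_sume_distrl; last by move=> *; rewrite lee_fin.
rewrite sumEFin sumr_const card_ord.
apply: lee_wpmul2r; first exact: esum_ge0.
rewrite lee_fin -[K *+ _]mulr_natr ler_wpM2l // /N -addn2 natrD lerD2r.
by rewrite truncn_le enorm_ge0.
Qed.

End boundary_crossings.

Section indicator_convolution.
Variables (R : realType) (n : nat) (M : 'M[R]_n).
Local Notation L := (lattice M).
Variables (Omega : set 'cV[R]_n) (phi : 'cV[R]_n -> R).
Hypothesis phi_ge0 : forall x, L x -> 0 <= phi x.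

Lemma lconv_indicator l : L l ->
  lconv M \1_Omega phi l = fine (\esum_(mu in L) ((\1_Omega (l - mu) : R) * phi mu)%:E)%E.
Proof.
move=> Ll; rewrite /lconv [X in _ - fine X]esum1 /= ?subr0; last first.
  move=> y Ly; congr (_%:E); apply/max_idPr.
  by rewrite oppr_le0 mulr_ge0 ?indicE ?ler0n // phi_ge0 //; exact: latticeB.
congr fine; rewrite (reindex_esum L L (fun mu => l - mu)); last first.
  split.
  - by move=> mu Lmu; exact: latticeB.
  - by move=> x y _ _ /= /addrI /oppr_inj.
  - by move=> y Ly; exists (l - y); [exact: latticeB | rewrite /= subKr].
apply: eq_esum => mu Lmu; rewrite subKr; congr (_%:E); apply/max_idPl.
by rewrite mulr_ge0 ?indicE ?ler0n ?phi_ge0.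
Qed.

Lemma indicator_sub_lconv_le (delta p : R) l : L l ->
  (\esum_(x in L) (phi x)%:E)%E = p%:E -> 1 - delta <= p -> p <= 1 ->
  ((`|(\1_Omega l : R) - lconv M \1_Omega phi l|)%:E <= (delta * \1_Omega l)%:E +
     \esum_(mu in L) (phi mu * `|(\1_Omega l : R) - \1_Omega (l - mu)|)%:E)%E.
Proof.
move=> Ll Pp p_lo p_hi; rewrite lconv_indicator //.
set A := (\esum_(mu in L) _)%E.
set D := (\esum_(mu in L) ((1 - \1_Omega (l - mu)) * phi mu)%:E)%E.
have ind01 mu : 0 <= (\1_Omega mu : R) <= 1.
  by rewrite indicE; case: (mu \in Omega); rewrite /= ?lexx ?ler01.
have inA mu : L mu -> (0 <= ((\1_Omega (l - mu) : R) * phi mu)%:E)%E.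
  by move=> Lmu; rewrite lee_fin mulr_ge0 ?phi_ge0 //; case/andP: (ind01 (l - mu)).
have inD mu : L mu -> (0 <= ((1 - \1_Omega (l - mu)) * phi mu)%:E)%E.
  by move=> Lmu; rewrite lee_fin mulr_ge0 ?phi_ge0 ?subr_ge0 //; case/andP: (ind01 (l - mu)).
have [A_ge0 D_ge0] : (0 <= A)%E /\ (0 <= D)%E by split; exact: esum_ge0.
have AD : (A + D)%E = p%:E.
  rewrite -Pp -esumD //; apply: eq_esum => mu _.
  by rewrite -EFinD -mulrDl addrC subrK mul1r.
have A_fin : A \is a fin_num by rewrite ge0_fin_numE // (le_lt_trans _ (ltry p)) // -AD leeDl.
have D_fin : D \is a fin_num by rewrite ge0_fin_numE // (le_lt_trans _ (ltry p)) // -AD leeDr.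
have [a_ge0 d_ge0] : 0 <= fine A /\ 0 <= fine D by split; exact: fine_ge0.
have ad : fine A + fine D = p by apply: EFin_inj; rewrite EFinD !fineK.
have [lO | lO] := boolP (l \in Omega).
  have -> : (\1_Omega l : R) = 1 by rewrite indicE lO.
  rewrite mulr1 (_ : (\esum_(mu in L) _)%E = D); last first.
    by apply: eq_esum => mu _; rewrite mulrC ger0_norm // subr_ge0; case/andP: (ind01 (l - mu)).
  by rewrite -(fineK D_fin) -EFinD lee_fin ger0_norm; lra.
have -> : (\1_Omega l : R) = 0 by rewrite indicE (negbTE lO).
rewrite mulr0 add0e (_ : (\esum_(mu in L) _)%E = A); last first.
  by apply: eq_esum => mu _; rewrite sub0r normrN mulrC ger0_norm //; case/andP: (ind01 (l - mu)).
by rewrite sub0r normrN ger0_norm // fineK.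
Qed.

Lemma l1norm_indicator_sub_lconv_le (delta : R) : 0 <= delta ->
  ((1 - delta)%:E <= \esum_(x in L) (phi x)%:E)%E ->
  (\esum_(x in L) (phi x)%:E <= 1%:E)%E ->
  (l1norm M (fun x => (\1_Omega x : R) - lconv M \1_Omega phi x)%R <=
     delta%:E * card_e (Omega `&` L) +
     \esum_(mu in L) ((phi mu)%:E *
       \esum_(l in L) (`|(\1_Omega l : R) - \1_Omega (l - mu)|)%:E))%E.
Proof.
move=> delta_ge0 P_lo P_hi.
have P_fin : (\esum_(x in L) (phi x)%:E)%E \is a fin_num.
  rewrite ge0_fin_numE ?(le_lt_trans P_hi (ltry _)) //.
  by apply: esum_ge0 => x Lx; rewrite lee_fin phi_ge0.
have Pp := esym (fineK P_fin).
move: P_lo P_hi; rewrite Pp !lee_fin => p_lo p_hi.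
have ind_ge0 x : 0 <= (\1_Omega x : R) by rewrite indicE ler0n.
rewrite /l1norm.
apply: le_trans (le_esum (fun l Ll => indicator_sub_lconv_le Ll Pp p_lo p_hi)) _.
rewrite esumD; first last.
- by move=> l _; apply: esum_ge0 => mu Lmu; rewrite lee_fin mulr_ge0 ?phi_ge0.
- by move=> l _; rewrite lee_fin mulr_ge0.
apply: leeD.
  under eq_esum do rewrite EFinM.
  rewrite ge0_esumZl // /card_e esum_mkcondl lee_wpmul2l ?lee_fin //.
  by apply: le_esum => l _; rewrite indicE; case: (l \in Omega).
rewrite exchange_esum; last by move=> l mu _ Lmu; rewrite lee_fin mulr_ge0 ?phi_ge0.
apply: le_esum => mu Lmu; under eq_esum do rewrite EFinM.
by rewrite ge0_esumZl ?phi_ge0 // => l _; rewrite lee_fin.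
Qed.

End indicator_convolution.

Lemma esum_moment_le (R : realType) (T : choiceType) (D : set T) (w phi : T -> R)
    (K : R) (B : \bar R) :
  0 <= K -> (0 <= B)%E -> (forall x, D x -> 0 <= w x) -> (forall x, D x -> 0 <= phi x) ->
  (\esum_(x in D) (phi x)%:E <= 1%:E)%E ->
  (\esum_(x in D) (w x * `|phi x|)%:E < +oo)%E ->
  (\esum_(x in D) ((phi x)%:E * ((K * (w x + 2))%:E * B)) <=
     (2 * K + 1)%:E * (\esum_(x in D) (w x * `|phi x|)%:E + 1%:E) * B)%E.
Proof.
move=> K_ge0 B_ge0 w_ge0 phi_ge0 P_le1 S_lt.
have wphi_ge0 x : D x -> 0 <= w x * `|phi x| by move=> Dx; rewrite mulr_ge0 ?w_ge0.
have [s s_ge0 Ss] : exists2 s, 0 <= s & (\esum_(x in D) (w x * `|phi x|)%:E)%E = s%:E.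
  have S_ge0 : (0 <= \esum_(x in D) (w x * `|phi x|)%:E)%E.
    by apply: esum_ge0 => x /wphi_ge0; rewrite lee_fin.
  by exists (fine (\esum_(x in D) (w x * `|phi x|)%:E)%E); rewrite ?fine_ge0 ?fineK ?ge0_fin_numE.
have [p /andP[p_ge0 p_le1] Pp] :
    exists2 p, 0 <= p <= 1 & (\esum_(x in D) (phi x)%:E)%E = p%:E.
  have P_ge0 : (0 <= \esum_(x in D) (phi x)%:E)%E.
    by apply: esum_ge0 => x /phi_ge0; rewrite lee_fin.
  have P_fin : (\esum_(x in D) (phi x)%:E)%E \is a fin_num.
    by rewrite ge0_fin_numE ?(le_lt_trans P_le1 (ltry _)).
  exists (fine (\esum_(x in D) (phi x)%:E)%E); last by rewrite fineK.
  by rewrite fine_ge0 //= -lee_fin fineK.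
rewrite Ss -EFinD -EFinM.
case: B B_ge0 => [b | _ | //]; last by rewrite gt0_muley ?leey // lte_fin; nra.
rewrite lee_fin => b_ge0.
have -> : (\esum_(x in D) ((phi x)%:E * ((K * (w x + 2))%:E * b%:E)) =
    (K * b)%:E * \esum_(x in D) (w x * `|phi x| + 2 * phi x)%:E)%E.
  rewrite -ge0_esumZl ?mulr_ge0 // => [|x Dx]; last first.
    by rewrite lee_fin addr_ge0 ?wphi_ge0 ?mulr_ge0 ?phi_ge0.
  apply: eq_esum => x Dx; rewrite -!EFinM (ger0_norm (phi_ge0 _ Dx)).
  by congr (_%:E); ring.
under eq_esum do rewrite EFinD [(2 * _)%:E]EFinM.
rewrite esumD ?ge0_esumZl //; last by move=> x Dx; rewrite mule_ge0 ?lee_fin ?phi_ge0.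
rewrite Ss Pp -[(2%:E * _)%E]EFinM -EFinD -EFinM lee_fin.
have : K * b * p <= K * b by rewrite ler_piMr ?mulr_ge0.
have : 0 <= K * b * s by rewrite !mulr_ge0.
have : 0 <= b * s by rewrite mulr_ge0.
have : 0 <= K * b by rewrite mulr_ge0.
nra.
Qed.

Theorem proposition2p2 (R : realType) (d : nat) (hd : (1 <= d)%N)
  (M : 'M[R]_(2 * d)) (hM : M \in unitmx) (r : R) (hr : 0 < r) :
  exists C : R,
  forall (phi : 'cV[R]_(2 * d) -> R) (delta : R),
    (forall x, lattice M x -> 0 <= phi x) ->
    (l1norm M phi < +oo)%E ->
    (\esum_(x in lattice M) (enorm x * `|phi x|)%:E < +oo)%E ->
    0 <= delta <= 1 ->
    ((1 - delta)%:E <= \esum_(x in lattice M) (phi x)%:E)%E ->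
    (\esum_(x in lattice M) (phi x)%:E <= 1%:E)%E ->
    forall O : set 'cV[R]_(2 * d), compact O ->
      (l1norm M (fun x => (\1_O x : R) - lconv M \1_O phi x)%R <=
        C%:E * ((\esum_(x in lattice M) (enorm x * `|phi x|)%:E) + 1%:E)
             * card_e (lat_bdry M O (r + diam_fund M))
        + delta%:E * card_e (O `&` lattice M))%E.
Proof.
have [K K_ge0 cube_card_le] :=
  lattice_cube_card_bounded hM (addr_ge0 ler01 (diam_fund_ge0 M)).
exists (2 * K + 1) => phi delta phi_ge0 _ moment_lt /andP[delta_ge0 _] P_lo P_hi O cO.
have clO : closed O := compact_closed (@norm_hausdorff _ _) cO.
apply: le_trans (l1norm_indicator_sub_lconv_le O phi_ge0 delta_ge0 P_lo P_hi) _.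
rewrite [leRHS]addeC; apply: leeD2l.
have B_ge0 : (0 <= card_e (lat_bdry M O (r + diam_fund M)))%E by exact: esum_ge0.
apply: le_trans _ (esum_moment_le K_ge0 B_ge0 (fun x _ => enorm_ge0 x) phi_ge0 P_hi moment_lt).
apply: le_esum => mu Lmu; apply: lee_wpmul2l; first by rewrite lee_fin phi_ge0.
exact: esum_indicator_shift_le.
Qed.
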